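(* Let $n\ge2$, $\boldsymbol{\lambda}=(\lambda_1,\dots,\lambda_n)$ a vector of positive integers, $\ell=\mathrm{lcm}(\lambda_1,\dots,\lambda_{n-1})$ and $\boldsymbol{\lambda}'=(\lambda_1,\dots,\lambda_{n-1},\lambda_n+\ell)$. Let $(a_1,\dots,a_n,d)$ be a minimal generator of $M(\boldsymbol{\lambda})$ of type (4), and let $a_n'$ be the smallest integer such that $\frac{a_1}{\lambda_1}+\cdots+\frac{a_{n-1}}{\lambda_{n-1}}+\frac{a_n'}{\lambda_n+\ell}\ge d$. Then $a_n'=a_n+d\ell-\frac{\ell}{\lambda_1}a_1-\cdots-\frac{\ell}{\lambda_{n-1}}a_{n-1}$, and $(a_1,\dots,a_{n-1},a_n',d)$ is a minimal generator of $M(\boldsymbol{\lambda}')$ of type (4).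
   Context: For a vector $\boldsymbol{\mu}$ of $n$ positive integers, $M(\boldsymbol{\mu})=\{(a_1,\dots,a_n,d)\in\mathbb{N}^{n+1}\mid a_1/\mu_1+\cdots+a_n/\mu_n\ge d\}$. A minimal generator of $M(\boldsymbol{\mu})$ is a nonzero element that cannot be written as the sum of two nonzero elements of $M(\boldsymbol{\mu})$. A minimal generator $(a_1,\dots,a_n,d)$ is of type (4) if $d>0$ and $a_ia_n>0$ for some $1\le i<n$. *)

From mathcomp Require Import all_boot all_order all_algebra.
Set Implicit Arguments. Unset Strict Implicit. Unset Printing Implicit Defensive.
Import Order.TTheory GRing.Theory Num.Theory.
Local Open Scope ring_scope.

(* Vectors of length n are encoded as functions nat -> nat; only the values
   at indices 0..n-1 are relevant (index i here = index i+1 in the paper). *)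

Definition inM (n : nat) (mu : nat -> nat) (a : nat -> nat) (d : nat) : Prop :=
  (d%:R : rat) <= \sum_(i < n) ((a i)%:R / (mu i)%:R).

Definition nonzeroV (n : nat) (a : nat -> nat) (d : nat) : Prop :=
  (exists i, (i < n)%N /\ a i <> 0%N) \/ d <> 0%N.

Definition min_gen (n : nat) (mu : nat -> nat) (a : nat -> nat) (d : nat) : Prop :=
  [/\ inM n mu a d, nonzeroV n a d &
    forall (b : nat -> nat) (c : nat) (e : nat -> nat) (f : nat),
      inM n mu b c -> inM n mu e f -> nonzeroV n b c -> nonzeroV n e f ->
      ~ ((forall i, (i < n)%N -> a i = (b i + e i)%N) /\ d = (c + f)%N)].

Definition type4 (n : nat) (a : nat -> nat) (d : nat) : Prop :=
  (0 < d)%N /\ exists i, (i < n.-1)%N /\ (0 < a i * a n.-1)%N.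

Definition lcm_init (n : nat) (lam : nat -> nat) : nat :=
  \big[lcmn/1%N]_(i < n.-1) lam i.

Definition lam_shift (n : nat) (lam : nat -> nat) : nat -> nat :=
  fun i => if i == n.-1 then (lam i + lcm_init n lam)%N else lam i.

(* Write l = lcm(lam_1, ..., lam_{n-1}) and let the deficit of (b, c) be
   D(b, c) = c l - sum_{i<n} (l / lam_i) b_i, which is additive and ignores b_n.
   Clearing denominators, (b, c) lies in M(mu) iff D mu_n <= b_n l whenever mu
   agrees with lam before n, and D (lam_n + l) <= x l iff D lam_n <= (x - D) l.
   So raising the last coordinate by D >= 0 maps M(lam) into M(lam'), lowering it
   by D maps M(lam') back into M(lam) (there D <= b_n); since lowering respects
   sums, a decomposition of the raised generator would lower to one of (a, d).
   Minimality of (a, d) makes a_n the least x with D lam_n <= x l (otherwise split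
   off the unit vector e_n), so the least a_n' is a_n + D, and D > 0 as a_n > 0. *)

From mathcomp Require Import all_boot all_order all_algebra zify ring.
Import Order.TTheory GRing.Theory Num.Theory.
Set Implicit Arguments. Unset Strict Implicit. Unset Printing Implicit Defensive.
Local Open Scope ring_scope.

Lemma raise_leE (D p L z : int) :
  (D * (p + L) <= z * L) = (D * p <= (z - D) * L).
Proof. by rewrite mulrDr mulrBl lerBrDr. Qed.

Lemma raise_le_bound (D p L z : int) :
  0 <= p -> 0 < L -> 0 <= z -> D * (p + L) <= z * L -> D <= z.
Proof. nia. Qed.

Lemma least_raise (D p L x z : int) :
  0 < L -> D * p <= x * L -> ~~ (D * p <= (x - 1) * L) ->
  D * (p + L) <= z * L -> (forall w, D * (p + L) <= w * L -> z <= w) ->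
  z = x + D.
Proof.
move=> L_gt0 x_ok x_tight; rewrite raise_leE => z_ok z_least.
apply/eqP; rewrite eq_le z_least ?raise_leE ?addrK //=.
rewrite leNgt; apply: contraNN x_tight => lt_z.
by apply: le_trans z_ok _; rewrite ler_pM2r //; lia.
Qed.

Lemma lcm_init_gt0 N (lam : nat -> nat) :
  (forall i, (i < N)%N -> (0 < lam i)%N) -> (0 < lcm_init N.+1 lam)%N.
Proof.
move=> lam_gt0; rewrite /lcm_init /=.
by elim/big_rec: _ => // i x _ x_gt0; rewrite lcmn_gt0 x_gt0 lam_gt0.
Qed.

Lemma dvdn_lcm_init N (lam : nat -> nat) i :
  (i < N)%N -> (lam i %| lcm_init N.+1 lam)%N.
Proof. by move=> lt_iN; apply: (@biglcmn_sup _ (Ordinal lt_iN)). Qed.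

Definition upd_last (N : nat) (b : nat -> nat) (m : nat) : nat -> nat :=
  fun i => if i == N then m else b i.

Section LcmScaling.

Variables (N : nat) (lam : nat -> nat).
Hypothesis lam_gt0 : forall i, (i < N)%N -> (0 < lam i)%N.

Local Notation L := (lcm_init N.+1 lam).

Definition head_sum (b : nat -> nat) : nat :=
  (\sum_(i < N) b i * (L %/ lam i))%N.

Definition deficit (b : nat -> nat) (c : nat) : int :=
  (c * L)%:Z - (head_sum b)%:Z.

Lemma natr_lcm_div i : (i < N)%N -> (L %/ lam i)%:R = L%:R / (lam i)%:R :> rat.
Proof.
move=> lt_iN; rewrite -{2}(divnK (dvdn_lcm_init lam lt_iN)) natrM mulfK //.
by rewrite pnatr_eq0 -lt0n lam_gt0.
Qed.

Lemma sum_lcm_ratio (b : nat -> nat) :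
  \sum_(i < N) (L%:R / (lam i)%:R * (b i)%:R) = (head_sum b)%:R :> rat.
Proof.
by rewrite natr_sum; apply: eq_bigr => i _; rewrite natrM natr_lcm_div // mulrC.
Qed.

Lemma sum_ratio_lcm (b : nat -> nat) :
  \sum_(i < N) ((b i)%:R / (lam i)%:R) = (head_sum b)%:R / L%:R :> rat.
Proof.
rewrite -sum_lcm_ratio mulr_suml; apply: eq_bigr => i _.
by field; rewrite !pnatr_eq0 -!lt0n (lcm_init_gt0 lam_gt0) lam_gt0.
Qed.

Lemma le_sum_ratioP (b : nat -> nat) (c : nat) (z : int) (q : nat) : (0 < q)%N ->
  ((c%:R : rat) <= \sum_(i < N) ((b i)%:R / (lam i)%:R) + z%:~R / q%:R)
  <-> deficit b c * q%:Z <= z * L%:Z.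
Proof.
move=> q_gt0; have Lq_gt0 : 0 < (L * q)%:R :> rat.
  by rewrite ltr0n muln_gt0 (lcm_init_gt0 lam_gt0).
rewrite sum_ratio_lcm -(ler_pM2r Lq_gt0).
have -> : ((head_sum b)%:R / L%:R + z%:~R / q%:R) * (L * q)%:R
        = ((head_sum b * q)%:Z + z * L%:Z)%:~R :> rat.
  rewrite intrD intrM natrM /=; field.
  by rewrite !pnatr_eq0 -!lt0n (lcm_init_gt0 lam_gt0) q_gt0.
rewrite -natrM mulnA -[(_ * _)%:R]/((c * L * q)%:Z%:~R) ler_int /deficit.
split; lia.
Qed.

Local Notation lam' := (lam_shift N.+1 lam).

Lemma inM_deficitP (mu b : nat -> nat) (c : nat) :
  (forall i, (i < N)%N -> mu i = lam i) -> (0 < mu N)%N ->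
  inM N.+1 mu b c <-> deficit b c * (mu N)%:Z <= (b N)%:Z * L%:Z.
Proof.
move=> mu_lam mu_gt0; rewrite /inM big_ord_recr /=.
rewrite (eq_bigr (fun i : 'I_N => (b i)%:R / (lam i)%:R)) => [|i _].
  exact: (le_sum_ratioP b c (b N) mu_gt0).
by rewrite mu_lam.
Qed.

Lemma inM_shiftP (b : nat -> nat) (c : nat) :
  inM N.+1 lam' b c <-> deficit b c * ((lam N)%:Z + L%:Z) <= (b N)%:Z * L%:Z.
Proof.
rewrite -PoszD; have := @inM_deficitP lam' b c; rewrite /lam_shift /= eqxx; apply.
- by move=> i lt_iN; rewrite (ltn_eqF lt_iN).
- by rewrite addn_gt0 (lcm_init_gt0 lam_gt0) orbT.
Qed.

Lemma head_sum_upd (b : nat -> nat) (m : nat) : head_sum (upd_last N b m) = head_sum b.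
Proof. by apply: eq_bigr => i _; rewrite /upd_last (ltn_eqF (ltn_ord i)). Qed.

Lemma deficit_upd (b : nat -> nat) (m c : nat) :
  deficit (upd_last N b m) c = deficit b c.
Proof. by rewrite /deficit head_sum_upd. Qed.

Lemma deficitD (a b e : nat -> nat) (c f : nat) :
  (forall i, (i < N)%N -> a i = (b i + e i)%N) ->
  deficit a (c + f) = deficit b c + deficit e f.
Proof.
move=> a_sum; rewrite /deficit.
have -> : head_sum a = (head_sum b + head_sum e)%N.
  by rewrite -big_split; apply: eq_bigr => i _; rewrite a_sum // mulnDl.
lia.
Qed.

Definition lower_last (b : nat -> nat) (c : nat) : nat := (b N + head_sum b - c * L)%N.

Definition lower (b : nat -> nat) (c : nat) : nat -> nat := upd_last N b (lower_last b c).

Lemma lower_lastE (b : nat -> nat) (c : nat) :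
  inM N.+1 lam' b c -> (lower_last b c)%:Z = (b N)%:Z - deficit b c.
Proof.
move/inM_shiftP/raise_le_bound => D_le.
have := D_le isT (lcm_init_gt0 lam_gt0 : 0 < L%:Z) isT; rewrite /lower_last /deficit; lia.
Qed.

Lemma nonzeroV_lower (b : nat -> nat) (c : nat) :
  nonzeroV N.+1 b c -> nonzeroV N.+1 (lower b c) c.
Proof.
case=> [[i [lt_i bi_neq0]] | c_neq0]; last by right.
case: (posnP c) => [c0 | c_gt0]; last by right; lia.
left; exists i; split=> //; rewrite /lower /upd_last /lower_last c0.
by case: eqP => [eq_iN | //]; move: bi_neq0; rewrite eq_iN; lia.
Qed.

Hypothesis lamN_gt0 : (0 < lam N)%N.

Lemma inM_lamP (b : nat -> nat) (c : nat) :
  inM N.+1 lam b c <-> deficit b c * (lam N)%:Z <= (b N)%:Z * L%:Z.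
Proof. exact: inM_deficitP. Qed.

Lemma inM_lower (b : nat -> nat) (c : nat) :
  inM N.+1 lam' b c -> inM N.+1 lam (lower b c) c.
Proof.
move=> b_in; apply/inM_lamP; rewrite /lower deficit_upd /upd_last eqxx lower_lastE //.
by rewrite -raise_leE; apply/inM_shiftP.
Qed.

Lemma min_gen_raise (a : nat -> nat) (d m : nat) :
  min_gen N.+1 lam a d -> (0 < d)%N -> m%:Z = (a N)%:Z + deficit a d ->
  min_gen N.+1 lam' (upd_last N a m) d.
Proof.
case=> a_in _ a_min d_gt0 mE; split.
- apply/inM_shiftP; rewrite deficit_upd /upd_last eqxx mE raise_leE addrK.
  exact/inM_lamP.
- by right; apply/eqP; rewrite -lt0n.
move=> b c e f b_in e_in b_nz e_nz [a_sum d_sum].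
have head_sum_be i : (i < N)%N -> a i = (b i + e i)%N.
  by move=> lt_iN; have := a_sum i (ltnW lt_iN); rewrite /upd_last (ltn_eqF lt_iN).
apply: (a_min (lower b c) c (lower e f) f);
  [exact: inM_lower | exact: inM_lower | exact: nonzeroV_lower | exact: nonzeroV_lower |].
split=> // i; rewrite ltnS leq_eqVlt => /predU1P[-> | lt_iN].
  have := a_sum N (ltnSn N); have := deficitD c f head_sum_be.
  rewrite /lower /upd_last !eqxx -d_sum => Da mN; apply/eqP.
  by rewrite -eqz_nat PoszD !lower_lastE //; lia.
by rewrite /lower /upd_last (ltn_eqF lt_iN) head_sum_be.
Qed.

Lemma min_gen_last_tight (a : nat -> nat) (d : nat) :
  min_gen N.+1 lam a d -> (0 < d)%N -> (0 < a N)%N ->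
  ~~ (deficit a d * (lam N)%:Z <= ((a N)%:Z - 1) * L%:Z).
Proof.
case=> _ _ a_min d_gt0 aN_gt0; apply/negP => tight.
apply: (a_min (upd_last N a (a N).-1) d (upd_last N (fun=> 0%N) 1) 0).
- by apply/inM_lamP; rewrite deficit_upd /upd_last eqxx -subn1 -subzn.
- by apply/inM_lamP; rewrite /deficit head_sum_upd /head_sum big1.
- by right; apply/eqP; rewrite -lt0n.
- by left; exists N; rewrite /upd_last eqxx.
split=> [i _|]; last by rewrite addn0.
by rewrite /upd_last; case: eqP => [->|]; lia.
Qed.

End LcmScaling.

Theorem proposition5p6 (n : nat) (lam : nat -> nat) (a : nat -> nat) (d : nat)
    (an' : int) :
  (2 <= n)%N ->
  (forall i, (i < n)%N -> (0 < lam i)%N) ->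
  min_gen n lam a d -> type4 n a d ->
  (* an' is the smallest integer with
     a_1/l_1 + ... + a_{n-1}/l_{n-1} + an'/(l_n + l) >= d *)
  ((d%:R : rat) <= \sum_(i < n.-1) ((a i)%:R / (lam i)%:R)
                   + an'%:~R / (lam n.-1 + lcm_init n lam)%:R) ->
  (forall z : int,
     (d%:R : rat) <= \sum_(i < n.-1) ((a i)%:R / (lam i)%:R)
                     + z%:~R / (lam n.-1 + lcm_init n lam)%:R ->
     an' <= z) ->
  (an'%:~R : rat) = (a n.-1)%:R + (d * lcm_init n lam)%:R
                    - \sum_(i < n.-1) ((lcm_init n lam)%:R / (lam i)%:R * (a i)%:R)
  /\ exists m : nat, an' = m%:Z /\
     (let a' := fun i => if i == n.-1 then m else a i in
      min_gen n (lam_shift n lam) a' d /\ type4 n a' d).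
Proof.
case: n => [//|N] _ lam_gt0 a_gen [d_gt0 [i0 [lt_i0N]]] /=.
rewrite muln_gt0 => /andP[ai0_gt0 aN_gt0] an'_ok an'_least.
have lam_head_gt0 i : (i < N)%N -> (0 < lam i)%N by move=> ?; exact/lam_gt0/ltnW.
have lamN_gt0 := lam_gt0 N (ltnSn N).
have [a_in _ _] := a_gen.
have tight := min_gen_last_tight lam_head_gt0 lamN_gt0 a_gen d_gt0 aN_gt0.
have shift_gt0 : (0 < lam N + lcm_init N.+1 lam)%N by rewrite addn_gt0 lamN_gt0.
have an'E : an' = (a N)%:Z + deficit N lam a d.
  apply: (least_raise (lcm_init_gt0 lam_head_gt0 : 0 < (lcm_init N.+1 lam)%:Z) _ tight).
  - exact: (inM_lamP lam_head_gt0 lamN_gt0 a d).1 a_in.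
  - by rewrite -PoszD; exact: (le_sum_ratioP lam_head_gt0 a d an' shift_gt0).1 an'_ok.
  - move=> w; rewrite -PoszD.
    by move=> /(le_sum_ratioP lam_head_gt0 _ _ _ shift_gt0)/an'_least.
have D_gt0 : 0 < deficit N lam a d.
  move: tight; apply: contraNT; rewrite -leNgt => D_le0.
  by apply: (@le_trans _ _ 0); [apply: mulr_le0_ge0 | apply: mulr_ge0; lia].
split.
  by rewrite an'E (sum_lcm_ratio lam_head_gt0) /deficit intrD intrB addrA.
have mE : (absz an')%:Z = an' by rewrite gez0_abs // an'E addr_ge0 // ltW.
exists (absz an'); split=> //; split.
  by apply: (min_gen_raise lam_head_gt0 lamN_gt0 a_gen d_gt0); rewrite mE.
split=> //; exists i0; split=> //=.
by rewrite (ltn_eqF lt_i0N) eqxx muln_gt0 ai0_gt0 -ltz_nat mE an'E; lia.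
Qed.
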